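(* Let $\mathcal{X}=\mathbb{R}^3$ with the Euclidean topology, partially ordered by the cone $\mathbb{R}^3_+$. There exist a set $\mathcal{A}\subset\mathbb{R}^3$, a linear subspace $\mathcal{M}\subset\mathbb{R}^3$ and a linear functional $\pi:\mathcal{M}\to\mathbb{R}$ such that $(\mathcal{A},\mathcal{M},\pi)$ is admissible (in the sense defined in the context) and the optimal set mapping $E:\mathbb{R}^3\rightrightarrows\mathcal{M}$ fails to be lower semicontinuous at some point $x\in\mathbb{R}^3$, while $E$ nevertheless admits a continuous selection, i.e. there is a continuous map $s:\mathbb{R}^3\to\mathcal{M}$ with $s(x)\in E(x)$ for every $x\in\mathbb{R}^3$.
   Context: Given a set $\mathcal{A}\subset\mathbb{R}^3$ (acceptable positions), a linear subspace $\mathcal{M}\subset\mathbb{R}^3$ (payoffs, with the relative topology) and a linear functional $\pi:\mathcal{M}\to\mathbb{R}$ (price), define the risk measure $\rho:\mathbb{R}^3\to[-\infty,+\infty]$ by $\rho(x)=\inf\{\pi(z)\,;\ z\in\mathcal{M},\ z+x\in\mathcal{A}\}$ and the optimal set mapping $E:\mathbb{R}^3\rightrightarrows\mathcal{M}$ by $E(x)=\{z\in\mathcal{M}\,;\ z+x\in\mathcal{A},\ \pi(z)=\rho(x)\}$. The triple $(\mathcal{A},\mathcal{M},\pi)$ is called admissible if: (R1) $\mathcal{A}$ is closed, convex, contains $0$, and is monotone: $x\in\mathcal{A}$ and $y-x\in\mathbb{R}^3_+$ imply $y\in\mathcal{A}$; (R2) there is no arbitrage: every $z\in\mathcal{M}\cap\mathbb{R}^3_+$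 with $z\neq0$ satisfies $\pi(z)>0$; (R3) $\rho$ is finite-valued and continuous on $\mathbb{R}^3$. The map $E$ is lower semicontinuous at $x$ if for every open set $\mathcal{U}\subset\mathcal{M}$ with $E(x)\cap\mathcal{U}\neq\emptyset$ there is a neighborhood $\mathcal{U}_x$ of $x$ in $\mathbb{R}^3$ such that $E(y)\cap\mathcal{U}\neq\emptyset$ for all $y\in\mathcal{U}_x$. *)

(* R^3 is 'rV[R]_3 over an arbitrary realType R
   (its canonical topology is the product = Euclidean topology). *)
From HB Require Import structures.
From mathcomp Require Import all_boot all_order all_algebra.
From mathcomp Require Import all_classical all_reals all_analysis.
Set Implicit Arguments. Unset Strict Implicit. Unset Printing Implicit Defensive.
Import Order.TTheory GRing.Theory Num.Theory.
Import numFieldNormedType.Exports.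
Local Open Scope classical_set_scope.
Local Open Scope ring_scope.

Section Defs.
Variable R : realType.
Notation X := 'rV[R]_3.

Definition nonneg_vec (x : X) : Prop := forall i, 0 <= x 0 i.

Definition convex_set3 (A : set X) : Prop :=
  forall x y (t : R), A x -> A y -> 0 <= t -> t <= 1 ->
    A (t *: x + (1 - t) *: y).

Definition monotone_set (A : set X) : Prop :=
  forall x y, A x -> nonneg_vec (y - x) -> A y.

Definition linear_subspace (M : set X) : Prop :=
  M 0 /\ forall (a : R) z1 z2, M z1 -> M z2 -> M (a *: z1 + z2).

(* pi is a linear functional on M: only its values on M matter *)
Definition linear_on (M : set X) (pi : X -> R) : Prop :=
  forall (a : R) z1 z2, M z1 -> M z2 -> pi (a *: z1 + z2) = a * pi z1 + pi z2.

Definition rho (A M : set X) (pi : X -> R) (x : X) : \bar R :=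
  ereal_inf [set (pi z)%:E | z in [set z | M z /\ A (z + x)]].

Definition optimal_set (A M : set X) (pi : X -> R) (x : X) : set X :=
  [set z | M z /\ A (z + x) /\ ((pi z)%:E = rho A M pi x)%E].

Definition admissible (A M : set X) (pi : X -> R) : Prop :=
  [/\ closed A /\ convex_set3 A /\ A 0 /\ monotone_set A,
      (forall z, M z -> nonneg_vec z -> z != 0 -> 0 < pi z) &
      (forall x, rho A M pi x \is a fin_num) /\
                 continuous (fun x => fine (rho A M pi x))].

(* lower semicontinuity at x; open subsets of M for the relative topology
   are the sets M `&` V with V open in R^3 *)
Definition lsc_at (M : set X) (E : X -> set X) (x : X) : Prop :=
  forall U : set X, (exists V : set X, open V /\ U = M `&` V) ->
    E x `&` U !=set0 ->
    exists Ux : set X, nbhs x Ux /\ forall y, Ux y -> E y `&` U !=set0.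

End Defs.

From HB Require Import structures.
From mathcomp Require Import all_boot all_order all_algebra.
From mathcomp Require Import all_classical all_reals all_analysis.
From mathcomp Require Import ring lra.
Import Order.TTheory GRing.Theory Num.Theory.
Import numFieldNormedType.Exports.
Set Implicit Arguments. Unset Strict Implicit. Unset Printing Implicit Defensive.
Local Open Scope classical_set_scope.
Local Open Scope ring_scope.

(** Take [A = {y | y0 >= -1, y1 >= -1, y0 + y1 >= 0, (y2^-)^2 <= (y0 + 1)(y0 + y1)}],
    [M = {z | z2 = 0}] and [pi z = z0 + z1].  The last constraint of [A] is a
    rotated second-order cone, hence convex, and [A] is monotone because the
    negative part is nonincreasing.  On the slice [{y2 = c}] the cheapest
    acceptable position costs [sqrt (1 + (c^-)^2) - 1] and is attained at
    [(sqrt (1 + (c^-)^2), -1, c)]; thus [rho x] is that cost minus [x0 + x1],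
    and translating this point by [-x] is a continuous optimal selection.
    For [c >= 0] every [(t, -t, c)] with [|t| <= 1] is optimal, whereas for
    [c < 0] an optimal position has [y0 >= 1].  So the optimal payoff
    [(-1, 1, 0)] at [x = 0] is not approached by optimal payoffs at the points
    [(0, 0, c)], [c < 0], and [E] is not lower semicontinuous at [0]. *)

Section NegativePart.
Variable R : realDomainType.
Implicit Types t u a b : R.

Definition negpart t : R := Num.max (- t) 0.

Lemma negpart_ge0 t : 0 <= negpart t.
Proof. by rewrite le_max lexx orbT. Qed.

Lemma negpart0 : negpart 0 = 0.
Proof. by rewrite /negpart oppr0 maxxx. Qed.

Lemma negpart_gt0 t : t < 0 -> 0 < negpart t.
Proof. by move=> t_lt0; rewrite lt_max oppr_gt0 t_lt0. Qed.

Lemma negpart_le t u : t <= u -> negpart u <= negpart t.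
Proof. by move=> tu; rewrite /negpart le_max2 // lerN2. Qed.

Lemma negpart_convex a b t : 0 <= t <= 1 ->
  negpart (t * a + (1 - t) * b) <= t * negpart a + (1 - t) * negpart b.
Proof.
case/andP=> t_ge0 t_le1; have t'_ge0 : 0 <= 1 - t by rewrite subr_ge0.
rewrite ge_max addr_ge0 ?mulr_ge0 ?negpart_ge0 // andbT opprD -!mulrN.
by rewrite lerD // ler_wpM2l // le_max lexx.
Qed.

End NegativePart.

Lemma negpart_continuous (R : realType) : continuous (@negpart R).
Proof.
apply: max_fun_continuous; last exact: cst_continuous.
by move=> t; apply: continuousN.
Qed.

Lemma sqr_negpart_continuous (R : realType) :
  continuous (fun t : R => negpart t ^+ 2).
Proof.
by move=> t; exact: continuous_comp (@negpart_continuous R t) (@exprn_continuous R 2 _).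
Qed.

Section RotatedCone.
Variable R : realDomainType.
Implicit Types a b k t : R.

Lemma mul_cross_le a b k a' b' k' :
  0 <= a -> 0 <= b -> 0 <= a' -> 0 <= b' ->
  k ^+ 2 <= a * b -> k' ^+ 2 <= a' * b' -> 2 * k * k' <= a * b' + a' * b.
Proof.
move=> a0 b0 a'0 b'0 hk hk'.
have sqr_le : (2 * k * k') ^+ 2 <= (a * b' + a' * b) ^+ 2.
  have := ler_pM (sqr_ge0 k) (sqr_ge0 k') hk hk'.
  have := sqr_ge0 (a * b' - a' * b); nra.
apply: le_trans (real_ler_norm _) _; first exact: num_real.
by rewrite -ler_sqr ?nnegrE ?normr_ge0 ?addr_ge0 ?mulr_ge0 // real_normK ?num_real.
Qed.

Lemma sqr_le_mul_convex a b k a' b' k' t :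
  0 <= t <= 1 -> 0 <= a -> 0 <= b -> 0 <= a' -> 0 <= b' ->
  k ^+ 2 <= a * b -> k' ^+ 2 <= a' * b' ->
  (t * k + (1 - t) * k') ^+ 2 <= (t * a + (1 - t) * a') * (t * b + (1 - t) * b').
Proof.
case/andP=> t0 t1 a0 b0 a'0 b'0 hk hk'.
have t'0 : 0 <= 1 - t by rewrite subr_ge0.
have := ler_wpM2l (mulr_ge0 t0 t'0) (mul_cross_le a0 b0 a'0 b'0 hk hk').
have := ler_wpM2l (sqr_ge0 t) hk; have := ler_wpM2l (sqr_ge0 (1 - t)) hk'.
nra.
Qed.

End RotatedCone.

Section RealTopology.
Variable R : realType.

Lemma closed_ge0 (T : topologicalType) (f : T -> R) :
  continuous f -> closed [set t | 0 <= f t].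
Proof.
move=> fc; apply: (@preimage_closed _ _ f [set r | 0 <= r]); last exact: closed_ge.
by move=> t _; exact: fc.
Qed.

Lemma nbhs0_scale_neg (V : normedModType R) (v : V) (U : set V) :
  nbhs 0 U -> exists2 c : R, c < 0 & U (c *: v).
Proof.
move=> U0; have : nbhs (0 : R) ((fun c : R => c *: v) @^-1` U).
  by apply: scalel_continuous; rewrite scale0r.
case/nbhs_ballP => e /= e_gt0 ball_sub.
exists (- (e / 2)); first by rewrite oppr_lt0 divr_gt0.
by apply: ball_sub; rewrite /ball /= sub0r opprK ger0_norm; lra.
Qed.

End RealTopology.

Section Example.
Variable R : realType.
Notation X := 'rV[R]_3.
Implicit Types (x y z : X) (c : R).

Definition price x : R := x ord0 0 + x ord0 1.

Definition acceptable : set X :=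
  [set y : X | [/\ 0 <= y ord0 0 + 1, 0 <= y ord0 1 + 1, 0 <= price y
               & negpart (y ord0 2) ^+ 2 <= (y ord0 0 + 1) * price y]].

Definition payoffs : set X := [set z : X | z ord0 2 = 0].

Definition min_price c : R := Num.sqrt (1 + negpart c ^+ 2) - 1.

Definition minimizer c : X :=
  (min_price c + 1) *: delta_mx 0 0 - delta_mx 0 1 + c *: delta_mx 0 2.

Definition selection x : X := minimizer (x ord0 2) - x.

Lemma priceD x y : price (x + y) = price x + price y.
Proof. by rewrite /price !mxE addrACA. Qed.

Lemma min_price_ge0 c : 0 <= min_price c.
Proof.
rewrite subr_ge0 -{1}sqrtr1 ler_wsqrtr // lerDl.
exact/exprn_ge0/negpart_ge0.
Qed.

Lemma sqr_min_priceD1 c : (min_price c + 1) ^+ 2 = 1 + negpart c ^+ 2.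
Proof. by rewrite subrK sqr_sqrtr // addr_ge0 // exprn_ge0 // negpart_ge0. Qed.

Lemma minimizerE c :
  [/\ minimizer c ord0 0 = min_price c + 1, minimizer c ord0 1 = -1
    & minimizer c ord0 2 = c].
Proof. by split; rewrite !mxE /=; ring. Qed.

Lemma price_minimizer c : price (minimizer c) = min_price c.
Proof. by have [m0 m1 _] := minimizerE c; rewrite /price m0 m1 addrK. Qed.

Lemma acceptable_minimizer c : acceptable (minimizer c).
Proof.
have [m0 m1 m2] := minimizerE c.
have sq := sqr_min_priceD1 c; have p0 := min_price_ge0 c.
rewrite /acceptable /= price_minimizer m0 m1 m2; split; [lra | lra | lra | nra].
Qed.

Lemma min_price_le_price y : acceptable y -> min_price (y ord0 2) <= price y.
Proof.
case=> y0 y1 p0 hk; have p1 : 0 <= price y + 1 by lra.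
rewrite lerBlDr -[leRHS]ger0_norm // -sqrtr_sqr ler_wsqrtr //.
have : y ord0 0 + 1 <= price y + 2 by rewrite /price; lra.
move/(ler_wpM2r p0); nra.
Qed.

Lemma min_price_attained_coord0_gt0 y : acceptable y -> 0 < negpart (y ord0 2) ->
  price y = min_price (y ord0 2) -> 0 < y ord0 0.
Proof.
case=> _ _ _ hk k_gt0 p_eq; move: hk.
have m := sqr_min_priceD1 (y ord0 2); have m0 := min_price_ge0 (y ord0 2).
rewrite p_eq; set k := negpart _ in k_gt0 m *; set s := min_price _ in p_eq m m0 *.
have s_gt0 : 0 < s.
  rewrite lt_neqAle m0 andbT; apply/eqP => s0; rewrite -s0 in m; nra.
nra.
Qed.

Lemma payoffs_addr_coord2 z x : payoffs z -> (z + x) ord0 2 = x ord0 2.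
Proof. by rewrite /payoffs /= mxE => ->; rewrite add0r. Qed.

Lemma payoffs_selection x : payoffs (selection x).
Proof. by rewrite /payoffs /= !mxE /=; ring. Qed.

Lemma rhoE x : rho acceptable payoffs price x = (min_price (x ord0 2) - price x)%:E.
Proof.
apply/eqP; rewrite eq_le; apply/andP; split.
- apply: ereal_inf_lbound; exists (selection x).
    by split; [exact: payoffs_selection | rewrite subrK; exact: acceptable_minimizer].
  congr (_%:E); apply/eqP; rewrite eq_sym subr_eq -priceD subrK.
  by rewrite price_minimizer.
- apply: le_ereal_inf_tmp => _ [z [Mz Az] <-].
  rewrite lee_fin lerBlDr -priceD -(payoffs_addr_coord2 x Mz).
  exact: min_price_le_price.
Qed.

Lemma optimal_setP x z : optimal_set acceptable payoffs price x z <->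
  [/\ payoffs z, acceptable (z + x) & price (z + x) = min_price (x ord0 2)].
Proof.
rewrite /optimal_set /= rhoE priceD.
split=> [[Mz [Az [pz]]]|[Mz Az pz]]; first by rewrite pz subrK.
by split=> //; split=> //; rewrite -pz addrK.
Qed.

Lemma optimal_selection x : optimal_set acceptable payoffs price x (selection x).
Proof.
apply/optimal_setP; rewrite subrK price_minimizer; split=> //.
  exact: payoffs_selection.
exact: acceptable_minimizer.
Qed.

Lemma payoffs_subspace : linear_subspace payoffs.
Proof.
split=> [|a z1 z2]; rewrite /payoffs /= !mxE //.
by move=> -> ->; rewrite mulr0 addr0.
Qed.

Lemma price_linear_on (M : set X) : linear_on M price.
Proof. by move=> a z1 z2 _ _; rewrite /price !mxE; ring. Qed.

Lemma price_gt0 z : payoffs z -> nonneg_vec z -> z != 0 -> 0 < price z.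
Proof.
move=> z2 z_ge0; apply: contraNT; rewrite -leNgt /price => p_le0.
have z0 := z_ge0 0; have z1 := z_ge0 1.
apply/eqP/rowP => j; rewrite mxE.
have [->|[->|->]] : j = 0 \/ j = 1 \/ j = 2.
  by case: j => -[|[|[|//]]] ?; [left|right; left|right; right]; apply: val_inj.
- lra.
- lra.
- exact: z2.
Qed.

Lemma acceptable0 : acceptable 0.
Proof. by rewrite /acceptable /= /price !mxE negpart0; split; lra. Qed.

Lemma monotone_acceptable : monotone_set acceptable.
Proof.
move=> x y [x0 x1 px kx] dxy.
have d i : x ord0 i <= y ord0 i by have := dxy i; rewrite !mxE subr_ge0.
have pxy : price x <= price y by rewrite lerD.
have kxy : negpart (y ord0 2) ^+ 2 <= negpart (x ord0 2) ^+ 2.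
  by rewrite ler_sqr ?nnegrE ?negpart_ge0 // negpart_le.
have d0 : x ord0 0 + 1 <= y ord0 0 + 1 by rewrite lerD2r; exact: d.
have := ler_pM x0 px d0 pxy.
have d1 := d 1; rewrite /acceptable /=; split; lra.
Qed.

Lemma convex_acceptable : convex_set3 acceptable.
Proof.
move=> x y t [x0 x1 px kx] [y0 y1 py ky] t0 t1.
have t01 : 0 <= t <= 1 by rewrite t0 t1.
have coord i : (t *: x + (1 - t) *: y) ord0 i = t * x ord0 i + (1 - t) * y ord0 i.
  by rewrite !mxE.
have pE : price (t *: x + (1 - t) *: y) = t * price x + (1 - t) * price y.
  by rewrite /price !coord; ring.
have comb1 a b : t * a + (1 - t) * b + 1 = t * (a + 1) + (1 - t) * (b + 1).
  by ring.
rewrite /acceptable /= pE !coord !comb1; split; [nra | nra | nra |].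
apply: le_trans (sqr_le_mul_convex t01 x0 px y0 py kx ky).
rewrite ler_sqr ?nnegrE ?negpart_convex ?negpart_ge0 //.
by rewrite addr_ge0 ?mulr_ge0 ?negpart_ge0 ?subr_ge0.
Qed.

Lemma price_continuous : continuous price.
Proof. by move=> x; apply: continuousD; apply: coord_continuous. Qed.

Lemma min_price_continuous : continuous min_price.
Proof.
move=> c; rewrite /min_price.
apply: (@continuousB _ _ _ (Num.sqrt \o (fun c => 1 + negpart c ^+ 2)) (cst 1));
  last exact: cst_continuous.
apply: continuous_comp; last exact: sqrt_continuous.
apply: (@continuousD _ _ _ (cst (1 : R)) (fun c : R => negpart c ^+ 2));
  [exact: cst_continuous | exact: sqr_negpart_continuous].
Qed.

Lemma comp_coord2_continuous (T : topologicalType) (f : R -> T) :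
  continuous f -> continuous (fun x : X => f (x ord0 2)).
Proof. by move=> fc x; apply: continuous_comp (fc _); exact: coord_continuous. Qed.

Lemma closed_acceptable : closed acceptable.
Proof.
have -> : acceptable = [set y : X | 0 <= y ord0 0 + 1] `&` [set y : X | 0 <= y ord0 1 + 1]
    `&` [set y | 0 <= price y]
    `&` [set y : X | 0 <= (y ord0 0 + 1) * price y - negpart (y ord0 2) ^+ 2].
  by apply/seteqP; split=> y /=; rewrite subr_ge0; [case | case=> [[[]]]].
have coordD1 i : continuous (fun y : X => y ord0 i + 1).
  move=> y; apply: (@continuousD _ _ _ (fun y : X => y ord0 i) (cst 1));
    [exact: coord_continuous | exact: cst_continuous].
repeat apply: closedI; apply: closed_ge0 => //; first exact: price_continuous.
move=> y; apply: (@continuousB _ _ _ (fun y : X => (y ord0 0 + 1) * price y)).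
  apply: (continuousM (s := fun y : X => y ord0 0 + 1) (t := price)).
    exact: coordD1.
  exact: price_continuous.
exact: (comp_coord2_continuous (@sqr_negpart_continuous R)) y.
Qed.

Lemma rho_continuous : continuous (fun x => fine (rho acceptable payoffs price x)).
Proof.
have -> : (fun x => fine (rho acceptable payoffs price x)) =
    (fun x : X => min_price (x ord0 2)) - price.
  by apply/funext => x; rewrite rhoE.
by move=> x; apply: continuousB; [exact: comp_coord2_continuous min_price_continuous x
  | exact: price_continuous].
Qed.

Lemma minimizer_continuous : continuous minimizer.
Proof.
move=> c; rewrite /minimizer.
apply: (@continuousD _ _ _ (fun c => (min_price c + 1) *: delta_mx 0 0 - delta_mx 0 1)
  (fun c => c *: delta_mx 0 2)); last exact/continuousZr_tmp/cvg_id.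
apply: (@continuousB _ _ _ (fun c => (min_price c + 1) *: delta_mx 0 0)
  (cst (delta_mx 0 1 : X))); last exact: cst_continuous.
apply: continuousZr_tmp; apply: (@continuousD _ _ _ min_price (cst 1));
  [exact: min_price_continuous | exact: cst_continuous].
Qed.

Lemma selection_continuous : continuous selection.
Proof.
move=> x; apply: (@continuousB _ _ _ (fun x : X => minimizer (x ord0 2)) id);
  [exact: comp_coord2_continuous minimizer_continuous x | exact: cvg_id].
Qed.

Lemma admissible_acceptable : admissible acceptable payoffs price.
Proof.
split.
- by split; [exact: closed_acceptable | split; [exact: convex_acceptable |
    split; [exact: acceptable0 | exact: monotone_acceptable]]].
- exact: price_gt0.
- by split; [move=> x; rewrite rhoE | exact: rho_continuous].
Qed.

Lemma optimal_set_not_lsc : ~ lsc_at payoffs (optimal_set acceptable payoffs price) 0.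
Proof.
pose V := [set z : X | z ord0 0 < 0].
have V_open : open V.
  have := (continuousP (fun z : X => z ord0 0)).1
    (@coord_continuous R 1 3 ord0 0) _ (open_lt (y := 0)).
  by [].
pose w : X := delta_mx 0 1 - delta_mx 0 0.
have w_opt : optimal_set acceptable payoffs price 0 w.
  apply/optimal_setP; rewrite addr0 /payoffs /acceptable /price /min_price /=.
  rewrite !mxE /= subrr negpart0 expr0n /= addr0 sqrtr1.
  by split; [lra | split; lra | lra].
move=> /(_ (payoffs `&` V) (ex_intro _ V (conj V_open erefl))) [|U [U0 EU]].
  by exists w; split=> //; split; [case/optimal_setP: w_opt | rewrite /V /= !mxE /=; lra].
have [c c_lt0 Uc] := nbhs0_scale_neg (delta_mx 0 2) U0.
have [z [/optimal_setP [Mz Az pz] [_ Vz]]] := EU _ Uc.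
have c2 : (c *: delta_mx 0 2 : X) ord0 2 = c by rewrite !mxE /= mulr1.
have zc2 : (z + c *: delta_mx 0 2) ord0 2 = c by rewrite payoffs_addr_coord2.
have zc0 : (z + c *: delta_mx 0 2) ord0 0 = z ord0 0 by rewrite !mxE /= mulr0 addr0.
rewrite c2 in pz; have := min_price_attained_coord0_gt0 Az.
rewrite zc0 zc2 => /(_ (negpart_gt0 c_lt0) pz).
by rewrite /V /= in Vz; lra.
Qed.

End Example.

Theorem mainTheorem1 (R : realType) :
  exists (A M : set 'rV[R]_3) (pi : 'rV[R]_3 -> R),
    linear_subspace M /\ linear_on M pi /\ admissible A M pi /\
    (exists x : 'rV[R]_3, ~ lsc_at M (optimal_set A M pi) x) /\
    (exists s : 'rV[R]_3 -> 'rV[R]_3,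
        continuous s /\ forall x, optimal_set A M pi x (s x)).
Proof.
exists (@acceptable R), (@payoffs R), (@price R).
split; first exact: payoffs_subspace.
split; first exact: price_linear_on.
split; first exact: admissible_acceptable.
split; first by exists 0; exact: optimal_set_not_lsc.
by exists (@selection R); split; [exact: selection_continuous | exact: optimal_selection].
Qed.
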